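(* As formal power series in $x$, $\widehat B(x)=\sum_{n\ge0}\beta_nx^n$ has the continued fraction expansion $$\widehat B(x)=\cfrac{1}{[1]_q+\cfrac{x}{\frac{q+1}{[1]_q}-\cfrac{x}{[3]_q+\cfrac{q[2]_qx}{\frac{q^2+1}{[2]_q}-\cfrac{[2]_qx}{[5]_q+\cfrac{q^2[3]_qx}{\frac{q^3+1}{[3]_q}-\cfrac{[3]_qx}{\ddots}}}}}}}$$ where the pattern is: for each $n\ge1$ the denominator $[2n-1]_q$ is followed by $+\,q^{n-1}[n]_q x$ over $\frac{q^n+1}{[n]_q}$, which is followed by $-\,[n]_qx$ over $[2n+1]_q$, and so on.
   Context: $q$ is an indeterminate. The $q$-Bernoulli–Carlitz numbers $\beta_n\in\mathbb{Q}(q)$ are defined by: for all $n\ge0$, $q\sum_{k=0}^{n}\binom{n}{k}q^k\beta_k-\beta_n$ equals $q-1$ if $n=0$, $1$ if $n=1$, and $0$ if $n>1$. $[m]_q=(q^m-1)/(q-1)$. *)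

From HB Require Import structures.
From mathcomp Require Import all_boot all_order all_algebra fraction.
Set Implicit Arguments. Unset Strict Implicit. Unset Printing Implicit Defensive.
Import Order.TTheory GRing.Theory Num.Theory.
Local Open Scope ring_scope.

Definition Kq : fieldType := {fraction {poly rat}}.
Definition qq : Kq := @FracField.tofrac {poly rat} (polyX rat).

Definition qint (m : nat) : Kq := (qq ^+ m - 1) / (qq - 1).

Definition fps := nat -> Kq.
Definition fps_const (c : Kq) : fps := fun n => if n == 0%N then c else 0.
Definition fps_add (f g : fps) : fps := fun n => f n + g n.
Definition fps_scale (c : Kq) (f : fps) : fps := fun n => c * f n.
Definition fps_mulX (f : fps) : fps := fun n => if n is k.+1 then f k else 0.

Fixpoint fps_inv_seq (f : fps) (n : nat) : seq Kq :=
  match n with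
  | 0 => [:: (f 0%N)^-1]
  | n'.+1 => let s := fps_inv_seq f n' in
      rcons s (- (f 0%N)^-1 * \sum_(i < n'.+1) f i.+1 * nth 0 s (n' - i))
  end.
Definition fps_inv (f : fps) : fps := fun n => nth 0 (fps_inv_seq f n) n.

(* Tail of the continued fraction
   a_j + c_{j+1} x / (a_{j+1} + c_{j+2} x / ( ... / a_{j+d})) *)
Fixpoint cf_tail (a c : nat -> Kq) (j d : nat) : fps :=
  match d with
  | 0 => fps_const (a j)
  | d'.+1 => fps_add (fps_const (a j))
               (fps_scale (c j.+1) (fps_mulX (fps_inv (cf_tail a c j.+1 d'))))
  end.

Definition cf_convergent (a c : nat -> Kq) (m : nat) : fps :=
  fps_inv (cf_tail a c 0 m).

(* Partial denominators: a_{2k} = [2k+1]_q, a_{2k+1} = (q^{k+1}+1)/[k+1]_q *)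
Definition cfB_a (j : nat) : Kq :=
  if odd j then (qq ^+ (j./2).+1 + 1) / qint (j./2).+1 else qint j.+1.
(* Partial numerator coefficients (of x): c_{2k+1} = q^k [k+1]_q,
   c_{2k+2} = - [k+1]_q *)
Definition cfB_c (j : nat) : Kq :=
  if odd j then qq ^+ (j./2) * qint (j./2).+1 else - qint (j./2).

Definition is_qBernoulliCarlitz (beta : nat -> Kq) : Prop :=
  forall n : nat,
    qq * (\sum_(k < n.+1) ('C(n, k))%:R * qq ^+ k * beta k) - beta n
    = if n == 0%N then qq - 1 else if n == 1%N then 1 else 0.

(* The q-Bernoulli–Carlitz recurrence says that G = B(x) satisfies the functional equation
   (q / (1 - x)) G(q x / (1 - x)) - G(x) = q - 1 + x, an instance of the Riccati-type relation
   A G G^ + B G + D G^ + E = 0 with polynomial coefficients, where G^ := G(q x / (1 - x)).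
   If G = 1 / (a + c x K), multiplying the relation by (a + c x K)(a + c Y K^), Y = q x / (1 - x),
   and using (1 - x) Y = q x shows that K satisfies a relation of the same kind.  Along the
   continued fraction the coefficients alternate between two explicit families indexed by
   [k]_q, and the constant term of each relation forces G_j(0) = 1 / a_j, which is exactly what
   the next step needs.  Hence the j-th remainder G_j of the expansion is well defined, and the
   convergents agree with B(x) to an order that grows with their depth. *)

From mathcomp Require Import all_boot all_order all_algebra fraction ring.
From Stdlib Require Import Ring FunctionalExtensionality.
Import GRing.Theory.
Set Implicit Arguments.
Unset Strict Implicit.
Unset Printing Implicit Defensive.
Local Open Scope ring_scope.

Section PowerSeries.
Variable F : fieldType.

Definition ps := nat -> F.
Definition psC (c : F) : ps := fun n => if n == 0%N then c else 0.
Definition ps0 : ps := psC 0.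
Definition ps1 : ps := psC 1.
Definition psX : ps := fun n => if n == 1%N then 1 else 0.
Definition psD (f g : ps) : ps := fun n => f n + g n.
Definition psN (f : ps) : ps := fun n => - f n.
Definition psB (f g : ps) : ps := fun n => f n - g n.
Definition psM (f g : ps) : ps := fun n => \sum_(i < n.+1) f i * g (n - i)%N.

Definition ps_of_poly (p : {poly F}) : ps := fun n => p`_n.
Definition ps_trunc (f : ps) (n : nat) : {poly F} := \poly_(i < n.+1) f i.
Definition eq_upto (n : nat) (f g : ps) := ps_trunc f n = ps_trunc g n.

End PowerSeries.

Arguments ps0 {F}.
Arguments ps1 {F}.
Arguments psX {F}.
Arguments psC {F} c%_R.
Arguments ps_of_poly {F} p%_R.

Declare Scope ps_scope.
Delimit Scope ps_scope with ps.
Notation "0" := ps0 : ps_scope.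
Notation "1" := ps1 : ps_scope.
Notation "''x'" := psX : ps_scope.
Notation "f + g" := (psD f g) : ps_scope.
Notation "- f" := (psN f) : ps_scope.
Notation "f - g" := (psB f g) : ps_scope.
Notation "f * g" := (psM f g) : ps_scope.

Section PowerSeriesTheory.
Variable F : fieldType.
Implicit Types (f g h : ps F) (p r : {poly F}) (c : F).

Lemma eq_uptoP n f g : eq_upto n f g <-> forall m, (m <= n)%N -> f m = g m.
Proof.
split=> [fg m le_mn | fg]; last by apply/polyP => i; rewrite !coef_poly; case: ltnP => // /fg.
by have /polyP/(_ m) := fg; rewrite !coef_poly ltnS le_mn.
Qed.

Lemma eq_upto_all f g : (forall n, eq_upto n f g) -> f = g.
Proof. by move=> fg; apply: functional_extensionality => n; have /eq_uptoP := fg n; apply. Qed.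

Lemma eq_upto_trunc n f : eq_upto n f (ps_of_poly (ps_trunc f n)).
Proof. by apply/eq_uptoP => m le_mn; rewrite /ps_of_poly coef_poly ltnS le_mn. Qed.

Lemma eq_upto_leq m n f g : (m <= n)%N -> eq_upto n f g -> eq_upto m f g.
Proof. by move=> le_mn /eq_uptoP fg; apply/eq_uptoP => k le_km; rewrite fg ?(leq_trans le_km). Qed.

Lemma ps_of_polyD p r : ps_of_poly (p + r) = (ps_of_poly p + ps_of_poly r)%ps.
Proof. by apply: functional_extensionality => n; rewrite /ps_of_poly coefD. Qed.

Lemma ps_of_polyN p : ps_of_poly (- p) = (- ps_of_poly p)%ps.
Proof. by apply: functional_extensionality => n; rewrite /ps_of_poly coefN. Qed.

Lemma ps_of_polyM p r : ps_of_poly (p * r) = (ps_of_poly p * ps_of_poly r)%ps.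
Proof. by apply: functional_extensionality => n; rewrite /ps_of_poly coefM. Qed.

Lemma ps_of_polyC c : ps_of_poly c%:P = psC c.
Proof. by apply: functional_extensionality => n; rewrite /ps_of_poly coefC. Qed.

Lemma ps_of_poly0 : ps_of_poly (0 : {poly F}) = 0%ps.
Proof. by rewrite /ps0 -ps_of_polyC. Qed.

Lemma ps_of_poly1 : ps_of_poly (1 : {poly F}) = 1%ps.
Proof. by rewrite /ps1 -ps_of_polyC. Qed.

Lemma ps_of_polyX : ps_of_poly ('X : {poly F}) = 'x%ps.
Proof. by apply: functional_extensionality => n; rewrite /ps_of_poly coefX /psX; case: eqP. Qed.

Definition ps_of_polyE :=
  (ps_of_polyD, ps_of_polyN, ps_of_polyM, ps_of_poly0, ps_of_poly1, ps_of_polyC,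
   ps_of_polyX).

Lemma psD_eq_upto n f f' g g' :
  eq_upto n f f' -> eq_upto n g g' -> eq_upto n (f + g)%ps (f' + g')%ps.
Proof. by move=> /eq_uptoP ff' /eq_uptoP gg'; apply/eq_uptoP => m le_mn; rewrite /psD ff' // gg'. Qed.

Lemma psM_eq_upto n f f' g g' :
  eq_upto n f f' -> eq_upto n g g' -> eq_upto n (f * g)%ps (f' * g')%ps.
Proof.
move=> /eq_uptoP ff' /eq_uptoP gg'; apply/eq_uptoP => m le_mn; apply: eq_bigr => i _.
have le_im : (i <= m)%N by rewrite -ltnS.
by rewrite ff' ?gg' ?(leq_trans le_im) ?(leq_trans (leq_subr i m)).
Qed.

Lemma psM_trunc n f g :
  eq_upto n (f * g)%ps (ps_of_poly (ps_trunc f n * ps_trunc g n)).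
Proof. by rewrite ps_of_polyM; apply: psM_eq_upto; apply: eq_upto_trunc. Qed.

(* Commutativity and associativity are inherited from polynomials, one truncation order at a time. *)
Lemma psMC f g : (f * g = g * f)%ps.
Proof.
by apply: eq_upto_all => n; rewrite /eq_upto (psM_trunc n f g) (psM_trunc n g f) mulrC.
Qed.

Lemma psMA f g h : (f * (g * h) = f * g * h)%ps.
Proof.
apply: eq_upto_all => n.
have E1 : eq_upto n (f * (g * h))%ps (ps_of_poly (ps_trunc f n * (ps_trunc g n * ps_trunc h n))).
  by rewrite ps_of_polyM; apply: psM_eq_upto (eq_upto_trunc _ _) (psM_trunc _ _ _).
have E2 : eq_upto n (f * g * h)%ps (ps_of_poly (ps_trunc f n * ps_trunc g n * ps_trunc h n)).
  by rewrite ps_of_polyM; apply: psM_eq_upto (psM_trunc _ _ _) (eq_upto_trunc _ _).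
by rewrite /eq_upto E1 E2 mulrA.
Qed.

Lemma coef_psMC c f n : (psC c * f)%ps n = c * f n.
Proof. by rewrite /psM big_ord_recl subn0 big1 ?addr0 // => i _; rewrite mul0r. Qed.

Lemma coef_psMX f n : ('x * f)%ps n = if n is m.+1 then f m else 0.
Proof.
rewrite /psM big_ord_recl mul0r add0r; case: n => [|m]; first by rewrite big_ord0.
by rewrite big_ord_recl mul1r subSS subn0 big1 ?addr0 // => i _; rewrite mul0r.
Qed.

Lemma ps_ring : ring_theory ps0 ps1 (@psD F) (@psM F) (@psB F) (@psN F) eq.
Proof.
constructor=> [f|f g|f g h|f|||f g h||f].
- by apply: functional_extensionality => n; rewrite /psD /ps0 /psC; case: eqP; rewrite add0r.
- by apply: functional_extensionality => n; rewrite /psD addrC.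
- by apply: functional_extensionality => n; rewrite /psD addrA.
- by apply: functional_extensionality => n; rewrite coef_psMC mul1r.
- exact: psMC.
- exact: psMA.
- by apply: functional_extensionality => n; rewrite /psD /psM -big_split; apply: eq_bigr => i _; rewrite mulrDl.
- by [].
- by apply: functional_extensionality => n; rewrite /psD /psN /ps0 /psC subrr; case: eqP.
Qed.

Lemma psMX_eq0 f : ('x * f)%ps = 0%ps -> f = 0%ps.
Proof.
move=> xf0; apply: functional_extensionality => n.
by have := congr1 (fun h => h n.+1) xf0; rewrite coef_psMX /= => ->; case: n.
Qed.
End PowerSeriesTheory.

Section Inverse.
Variable F : fieldType.
Implicit Types (f g h : ps F).
Add Ring ps_ring : (ps_ring F).

Fixpoint psV_seq f (n : nat) : seq F :=
  match n with
  | 0 => [:: (f 0%N)^-1]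
  | n'.+1 => let s := psV_seq f n' in
      rcons s (- (f 0%N)^-1 * \sum_(i < n'.+1) f i.+1 * nth 0 s (n' - i))
  end.
Definition psV f : ps F := fun n => nth 0 (psV_seq f n) n.

Lemma size_psV_seq f n : size (psV_seq f n) = n.+1.
Proof. by elim: n => //= n IHn; rewrite size_rcons IHn. Qed.

Lemma nth_psV_seq f n m : (m <= n)%N -> nth 0 (psV_seq f n) m = psV f m.
Proof.
elim: n => [|n IHn]; first by rewrite leqn0 => /eqP ->.
rewrite leq_eqVlt => /orP[/eqP -> // | lt_mn].
by rewrite /= nth_rcons size_psV_seq lt_mn IHn.
Qed.

Lemma coef0_psV f : psV f 0%N = (f 0%N)^-1.
Proof. by []. Qed.

Lemma coefS_psV f n :
  psV f n.+1 = - (f 0%N)^-1 * \sum_(i < n.+1) f i.+1 * psV f (n - i)%N.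
Proof.
rewrite /psV /= nth_rcons size_psV_seq ltnn eqxx; congr (_ * _).
by apply: eq_bigr => i _; rewrite nth_psV_seq ?leq_subr.
Qed.

Lemma psMV f : f 0%N != 0 -> (f * psV f)%ps = 1%ps.
Proof.
move=> f0; apply: functional_extensionality => -[|n].
  by rewrite /psM big_ord1 mulfV.
rewrite /psM big_ord_recl subn0 coefS_psV mulrA mulrN mulfV // mulN1r.
by apply/eqP; rewrite addrC subr_eq0; apply/eqP/eq_bigr => i _; rewrite subSS.
Qed.

Lemma psV_unique f g : f 0%N != 0 -> (f * g)%ps = 1%ps -> g = psV f.
Proof.
move=> f0 fg1; have fV1 := psMV f0.
transitivity (psV f * f * g)%ps; first by rewrite (psMC _ f) fV1; ring.
by rewrite -psMA fg1; ring.
Qed.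

Lemma psVK f : f 0%N != 0 -> psV (psV f) = f.
Proof.
by move=> f0; symmetry; apply: psV_unique; rewrite ?invr_eq0 // psMC psMV.
Qed.

Lemma psM_unit_eq0 f g : g 0%N != 0 -> (g * f)%ps = 0%ps -> f = 0%ps.
Proof.
move=> g0 gf0; transitivity (psV g * g * f)%ps; last by rewrite -psMA gf0; ring.
by rewrite (psMC _ g) psMV //; ring.
Qed.

Lemma psV_eq_upto n f f' : f 0%N != 0 -> eq_upto n f f' -> eq_upto n (psV f) (psV f').
Proof.
move=> f0 ff'; have /eq_uptoP ff'_coef := ff'.
have f'0 : f' 0%N != 0 by rewrite -ff'_coef.
have diffV : (psV f - psV f' = psV f * psV f' * (f' - f))%ps.
  transitivity (psV f * (f' * psV f') - psV f' * (f * psV f))%ps; last by ring.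
  by rewrite !psMV //; ring.
have : eq_upto n (psV f * psV f' * (f' - f))%ps (psV f * psV f' * 0)%ps.
  apply: psM_eq_upto => //; apply/eq_uptoP => m le_mn.
  by rewrite /psB ff'_coef // subrr /ps0 /psC; case: eqP.
have -> : (psV f * psV f' * 0 = 0)%ps by ring.
rewrite -diffV => /eq_uptoP dV; apply/eq_uptoP => m /dV.
by rewrite /psB /ps0 /psC if_same => /eqP; rewrite subr_eq0 => /eqP.
Qed.
End Inverse.

Lemma coef_expr_lt (R : comNzRingType) (r : {poly R}) k i :
  r`_0 = 0 -> (i < k)%N -> (r ^+ k)`_i = 0.
Proof.
move=> r0 lt_ik; have -> : r = drop_poly 1 r * 'X^1.
  rewrite -{1}[r](poly_take_drop 1) (_ : take_poly 1 r = 0) ?add0r //.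
  by apply/polyP => -[|j]; rewrite coef_take_poly coef0.
by rewrite exprMn -exprM mul1n coefMXn lt_ik.
Qed.

Section Composition.
Variable F : fieldType.
Implicit Types (f g : ps F) (p r : {poly F}) (c : F).
Add Ring ps_ring : (ps_ring F).

Fixpoint psexp f k : ps F := if k is k'.+1 then (f * psexp f k')%ps else 1%ps.

Lemma ps_of_polyXn r k : ps_of_poly (r ^+ k) = psexp (ps_of_poly r) k.
Proof. by elim: k => [|k IHk] /=; rewrite ?expr0 ?ps_of_poly1 // exprS ps_of_polyM IHk. Qed.

Lemma psexp_eq_upto n f g k : eq_upto n f g -> eq_upto n (psexp f k) (psexp g k).
Proof. by move=> fg; elim: k => //= k IHk; apply: psM_eq_upto. Qed.

Lemma eq_upto_comp_polyl n p p' r : r`_0 = 0 ->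
  eq_upto n (ps_of_poly p) (ps_of_poly p') ->
  eq_upto n (ps_of_poly (p \Po r)) (ps_of_poly (p' \Po r)).
Proof.
move=> r0 /eq_uptoP pp'; apply/eq_uptoP => m le_mn; apply/eqP.
rewrite -subr_eq0 /ps_of_poly -coefB -comp_polyB comp_polyE coef_sum big1 // => i _.
rewrite coefZ coefB; case: (leqP i n) => [le_in | lt_ni].
  by move: (pp' i le_in); rewrite /ps_of_poly => ->; rewrite subrr mul0r.
by rewrite coef_expr_lt ?mulr0 ?(leq_ltn_trans le_mn).
Qed.

Lemma eq_upto_comp_polyr n p r r' :
  eq_upto n (ps_of_poly r) (ps_of_poly r') ->
  eq_upto n (ps_of_poly (p \Po r)) (ps_of_poly (p \Po r')).
Proof.
move=> rr'; apply/eq_uptoP => m le_mn; rewrite /ps_of_poly !coef_comp_poly.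
apply: eq_bigr => i _; congr (_ * _).
by have /eq_uptoP := psexp_eq_upto i rr'; rewrite -!ps_of_polyXn; apply.
Qed.

Lemma eq_upto_trunc_leq m n f : (m <= n)%N ->
  eq_upto m (ps_of_poly (ps_trunc f m)) (ps_of_poly (ps_trunc f n)).
Proof. by move=> le_mn; rewrite /eq_upto -(eq_upto_trunc m f); apply: eq_upto_leq (eq_upto_trunc n f). Qed.

Lemma ps_truncD n f g : ps_trunc (f + g)%ps n = ps_trunc f n + ps_trunc g n.
Proof. by apply/polyP => i; rewrite coefD !coef_poly; case: ifP; rewrite ?addr0. Qed.

Lemma ps_truncC n c : ps_trunc (psC c) n = c%:P.
Proof. by apply/polyP => -[|i]; rewrite coef_poly coefC //=; case: ifP. Qed.

Lemma ps_truncX n : ps_trunc ('x%ps : ps F) n.+1 = 'X.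
Proof.
apply/polyP => i; rewrite coef_poly coefX /psX.
by case: ltnP => // le_ni; case: eqP => // i1; move: le_ni; rewrite i1.
Qed.

Lemma coef0_ps_trunc n f : (ps_trunc f n)`_0 = f 0%N.
Proof. by rewrite coef_poly. Qed.

Variable y : ps F.
Hypothesis y0 : y 0%N = 0.

Definition ps_comp f : ps F := fun n => (ps_trunc f n \Po ps_trunc y n)`_n.

Lemma ps_comp_trunc n f :
  eq_upto n (ps_comp f) (ps_of_poly (ps_trunc f n \Po ps_trunc y n)).
Proof.
have trunc_y0 m : (ps_trunc y m)`_0 = 0 by rewrite coef0_ps_trunc.
apply/eq_uptoP => m le_mn; rewrite -[LHS]/(ps_of_poly (ps_trunc f m \Po ps_trunc y m) m).
have /eq_uptoP -> // := eq_upto_comp_polyl (trunc_y0 m) (eq_upto_trunc_leq f le_mn).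
by have /eq_uptoP -> // := eq_upto_comp_polyr (ps_trunc f n) (eq_upto_trunc_leq y le_mn).
Qed.

Lemma ps_compM f g : ps_comp (f * g)%ps = (ps_comp f * ps_comp g)%ps.
Proof.
apply: eq_upto_all => n; rewrite /eq_upto (ps_comp_trunc n (f * g)%ps).
have fg_trunc : eq_upto n (ps_of_poly (ps_trunc (f * g)%ps n))
                          (ps_of_poly (ps_trunc f n * ps_trunc g n)).
  by rewrite /eq_upto -(eq_upto_trunc n (f * g)%ps) (psM_trunc n f g).
have y0_trunc : (ps_trunc y n)`_0 = 0 by rewrite coef0_ps_trunc.
rewrite (eq_upto_comp_polyl y0_trunc fg_trunc) comp_polyM ps_of_polyM.
by apply: psM_eq_upto; apply/esym/ps_comp_trunc.
Qed.

Lemma ps_compD f g : ps_comp (f + g)%ps = (ps_comp f + ps_comp g)%ps.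
Proof.
apply: eq_upto_all => n; rewrite /eq_upto (ps_comp_trunc n (f + g)%ps).
rewrite ps_truncD comp_polyD ps_of_polyD.
by apply: psD_eq_upto; apply/esym/ps_comp_trunc.
Qed.

Lemma ps_compC c : ps_comp (psC c) = psC c.
Proof.
apply: functional_extensionality => n.
by rewrite /ps_comp ps_truncC comp_polyC coefC.
Qed.

Lemma ps_compX : ps_comp ('x%ps : ps F) = y.
Proof.
apply: functional_extensionality => -[|n]; last first.
  by rewrite /ps_comp ps_truncX comp_polyX coef_poly ltnSn.
rewrite /ps_comp (_ : ps_trunc (psX : ps F) 0 = 0) ?comp_poly0 ?coef0 ?y0 //.
by apply/polyP => -[|i]; rewrite coef_poly coef0.
Qed.

Lemma coef0_ps_comp f : ps_comp f 0%N = f 0%N.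
Proof.
rewrite /ps_comp (_ : ps_trunc f 0 = (f 0%N)%:P) ?comp_polyC ?coefC //.
by apply/polyP => -[|i]; rewrite coef_poly coefC.
Qed.

Lemma coef_ps_comp f n : ps_comp f n = \sum_(i < n.+1) f i * psexp y i n.
Proof.
rewrite /ps_comp coef_comp_poly.
rewrite (big_ord_widen n.+1 (fun i => (ps_trunc f n)`_i * ((ps_trunc y n) ^+ i)`_n))
  ?size_poly // big_mkcond /=.
apply: eq_bigr => i _; have fi : (ps_trunc f n)`_i = f i by rewrite coef_poly ltn_ord.
case: ltnP => [_ | le_size]; last by rewrite -fi nth_default ?mul0r.
have /eq_uptoP <- // := psexp_eq_upto i (esym (eq_upto_trunc n y)).
by rewrite fi -ps_of_polyXn.
Qed.
End Composition.

Section QSubstitution.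
Variables (F : fieldType) (q : F).
Implicit Types (f : ps F).
Add Ring ps_ring : (ps_ring F).

(* [psY] is q x / (1 - x). *)
Definition psY : ps F := fun n => if n == 0%N then 0 else q.

Lemma coef_psM1subX f n : ((1 - 'x) * f)%ps n = f n - (if n is m.+1 then f m else 0).
Proof.
have -> : ((1 - 'x) * f = f - 'x * f)%ps by ring.
by rewrite /psB coef_psMX.
Qed.

Lemma psM1subX_psY : ((1 - 'x) * psY = psC q * 'x)%ps.
Proof.
apply: functional_extensionality => n; rewrite coef_psM1subX coef_psMC /psY /psX.
by case: n => [|[|n]] /=; rewrite ?subr0 ?mulr0 ?mulr1 ?subrr.
Qed.

Definition qbinom_series k : ps F := fun n => ('C(n, k))%:R * q ^+ k.

(* Y^k = (q x)^k / (1 - x)^(k+1), and sum_n C(n,k) x^n = x^k / (1 - x)^(k+1). *)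
Lemma psexp_psY k : psexp psY k = ((1 - 'x) * qbinom_series k)%ps.
Proof.
elim: k => [|k IHk] /=; apply: functional_extensionality => n.
  by rewrite coef_psM1subX /qbinom_series /ps1 /psC; case: n => [|n]; rewrite !bin0 expr0 mulr1 ?subr0 ?subrr.
rewrite IHk (_ : psY * _ = (1 - 'x) * psY * qbinom_series k)%ps; last by ring.
rewrite psM1subX_psY -psMA coef_psMC coef_psMX coef_psM1subX /qbinom_series.
case: n => [|n]; first by rewrite bin0n subr0 mul0r mulr0.
by rewrite binS natrD mulrDl addrAC subrr add0r exprS mulrCA.
Qed.

Definition qbinom_transform f : ps F :=
  fun n => \sum_(k < n.+1) ('C(n, k))%:R * q ^+ k * f k.

Lemma ps_comp_psY f : ps_comp psY f = ((1 - 'x) * qbinom_transform f)%ps.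
Proof.
apply: functional_extensionality => n; rewrite coef_ps_comp coef_psM1subX.
under eq_bigr => i _ do rewrite psexp_psY coef_psM1subX.
case: n => [|n]; rewrite /qbinom_transform.
  by rewrite !big_ord1 !subr0 mulrC.
have -> : \sum_(k < n.+1) ('C(n, k))%:R * q ^+ k * f k
          = \sum_(k < n.+2) ('C(n, k))%:R * q ^+ k * f k.
  by rewrite [RHS]big_ord_recr /= bin_small // !mul0r addr0.
by rewrite -sumrB; apply: eq_bigr => i _; rewrite mulrC mulrBl.
Qed.
End QSubstitution.

Section Riccati.
Variables (F : fieldType) (q : F).
Implicit Types (G K : ps F) (A B D E U : {poly F}) (a c lam : F).
Add Ring ps_ring : (ps_ring F).

Definition riccati A B D E G : Prop :=
  (ps_of_poly A * G * ps_comp (psY q) G + ps_of_poly B * G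
   + ps_of_poly D * ps_comp (psY q) G + ps_of_poly E = 0)%ps.

Definition cf_step a c K : ps F := (psC a + psC c * ('x * K))%ps.

Lemma riccati_coef0 A B D E G :
  riccati A B D E G -> A`_0 = 0 -> G 0%N * (B`_0 + D`_0) + E`_0 = 0.
Proof.
move=> /(congr1 (fun h => h 0%N)); rewrite /psD /psM !big_ord1 !coef0_ps_comp.
rewrite /ps_of_poly /= => RG0 A0; rewrite -[RHS]RG0 A0 subnn !mul0r add0r mulrDr.
by rewrite (mulrC _ B`_0) (mulrC _ D`_0).
Qed.

Lemma cf_step_eq_upto n a c K K' :
  eq_upto n K K' -> eq_upto n.+1 (cf_step a c K) (cf_step a c K').
Proof.
move=> /eq_uptoP KK'; apply/eq_uptoP => -[|m] le_mn; rewrite /cf_step /psD !coef_psMC !coef_psMX //.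
by rewrite KK'.
Qed.

Lemma psCM a c : psC (a * c) = (psC a * psC c)%ps.
Proof. by apply: functional_extensionality => n; rewrite coef_psMC /psC; case: eqP; rewrite ?mulr0. Qed.

Lemma riccati_cf_step A B D E A' B' D' E' U a c lam G K :
  riccati A B D E G -> (G * cf_step a c K = 1)%ps -> lam != 0 -> U`_0 != 0 ->
  (1 - 'X) * (A + a%:P * B + a%:P * D + (a * a)%:P * E) = 'X * (lam%:P * U * E') ->
  (c * q)%:P * (B + a%:P * E) = lam%:P * U * D' ->
  c%:P * (1 - 'X) * (D + a%:P * E) = lam%:P * U * B' ->
  (c * c * q)%:P * 'X * E = lam%:P * U * A' ->
  riccati A' B' D' E' K.
Proof.
move=> RG GL lam0 U0 /(congr1 ps_of_poly) eqE /(congr1 ps_of_poly) eqD.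
move=> /(congr1 ps_of_poly) eqB /(congr1 ps_of_poly) eqA.
rewrite /riccati !ps_of_polyE !psCM in eqE eqD eqB eqA *.
set CG := ps_comp (psY q) G in RG; set CK := ps_comp (psY q) K.
set L := cf_step a c K in GL; set L' := (psC a + psC c * (psY q * CK))%ps.
have CGL : (CG * L' = 1)%ps.
  have CL : ps_comp (psY q) L = L'.
    by rewrite /L /cf_step ps_compD // !ps_compM // !ps_compC ps_compX.
  by rewrite -CL -ps_compM // GL /ps1 ps_compC.
(* L' is the substituted L, so multiplying the relation for G by L L' clears G and its image. *)
have Z : (ps_of_poly A + ps_of_poly B * L' + ps_of_poly D * L + ps_of_poly E * L * L' = 0)%ps.
  transitivity (L * L' * (ps_of_poly A * G * CG + ps_of_poly B * G + ps_of_poly D * CG + ps_of_poly E)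
    - ps_of_poly A * (G * L * (CG * L') - 1) - ps_of_poly B * L' * (G * L - 1)
    - ps_of_poly D * L * (CG * L' - 1))%ps; first by ring.
  by rewrite RG GL CGL; ring.
have lamU0 : (psC lam * ps_of_poly U)%ps 0%N != 0 by rewrite coef_psMC mulf_neq0.
apply: (psM_unit_eq0 lamU0); apply: psMX_eq0.
transitivity ((1 - 'x) * (ps_of_poly A + ps_of_poly B * L' + ps_of_poly D * L
  + ps_of_poly E * L * L'))%ps; last by rewrite Z; ring.
transitivity ('x * (psC lam * ps_of_poly U * ps_of_poly E')
  + psC lam * ps_of_poly U * ps_of_poly D' * ('x * CK)
  + psC lam * ps_of_poly U * ps_of_poly B' * ('x * K)
  + psC lam * ps_of_poly U * ps_of_poly A' * ('x * K * CK))%ps; first by ring.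
rewrite -eqE -eqD -eqB -eqA.
(* Only (1 - x) Y = q x is needed to match (1 - x) Z term by term. *)
set pA := ps_of_poly A; set pB := ps_of_poly B; set pD := ps_of_poly D; set pE := ps_of_poly E.
rewrite [RHS](_ : _ = (1 - 'x) * (pA + psC a * pB + psC a * pD + psC a * psC a * pE)
  + psC c * (1 - 'x) * (pD + psC a * pE) * ('x * K)
  + ((1 - 'x) * psY q) * (psC c * (pB + psC a * pE + psC c * pE * ('x * K)) * CK))%ps.
  by rewrite psM1subX_psY; ring.
by rewrite /L' /L /cf_step; ring.
Qed.
End Riccati.

(* Relations met by the remainders of even and odd index.  They are written in terms of
   K = [k]_q (even) and M = [k+1]_q (odd), using q^k = 1 + (q - 1) [k]_q, so that the
   step identities below are plain polynomial identities, proved by algebra-tactics' [ring]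
   (the Stdlib [ring] imported above only serves power series). *)
Section RiccatiFamilies.
Variables (R : comNzRingType) (q : R).
Import mathcomp.algebra_tactics.ring.
Implicit Types (K M a : R).

Definition ev_A K : {poly R} := - (q * K ^+ 3)%:P * 'X * ((q - 1)%:P + 'X).
Definition ev_B K : {poly R} := - ((1 - 'X) * (1 - K%:P * 'X)).
Definition ev_D K : {poly R} :=
  q%:P * (((1 + (q - 1) * K)%:P + K%:P * 'X) ^+ 2 - K%:P * 'X).
Definition ev_E : {poly R} := - ((1 - 'X) * ((q - 1)%:P + 'X)).

Definition od_A M : {poly R} := (M * (1 + (q - 1) * M))%:P * 'X * ((q - 1)%:P + 'X).
Definition od_B M : {poly R} :=
  - (1 + (M * ((q - 1) * M - 1))%:P * 'X + (M ^+ 2)%:P * 'X ^+ 2).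
Definition od_D M : {poly R} :=
  (1 + (q - 1) * M)%:P * ((1 + (q - 1) * M)%:P + M%:P * 'X).
Definition od_E M : {poly R} := - ((M ^+ 2)%:P * ((q - 1)%:P + 'X)).

Section EvenStep.
Variable K : R.
Let a := 1 + 2 * q * K + q * (q - 1) * K ^+ 2.
Let c := (1 + (q - 1) * K) * (1 + q * K).
Let M := 1 + q * K.

Lemma ev_step_E :
  (1 - 'X) * (ev_A K + a%:P * ev_B K + a%:P * ev_D K + (a * a)%:P * ev_E)
  = 'X * ((- c)%:P * (1 - 'X) * od_E M).
Proof. rewrite /ev_A /ev_B /ev_D /ev_E /od_E /a /c /M. ring. Qed.

Lemma ev_step_D : (c * q)%:P * (ev_B K + a%:P * ev_E) = (- c)%:P * (1 - 'X) * od_D M.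
Proof. rewrite /ev_B /ev_E /od_D /a /c /M. ring. Qed.

Lemma ev_step_B :
  c%:P * (1 - 'X) * (ev_D K + a%:P * ev_E) = (- c)%:P * (1 - 'X) * od_B M.
Proof. rewrite /ev_D /ev_E /od_B /a /c /M. ring. Qed.

Lemma ev_step_A : (c * c * q)%:P * 'X * ev_E = (- c)%:P * (1 - 'X) * od_A M.
Proof. rewrite /ev_E /od_A /a /c /M. ring. Qed.
End EvenStep.

Section OddStep.
Variables (M a : R).
Hypothesis aM : a * M = 2 + (q - 1) * M.

Lemma od_E_scale : a%:P * od_E M = - ((a * M) * M)%:P * ((q - 1)%:P + 'X).
Proof. by rewrite /od_E; ring. Qed.

Lemma od_step_E :
  (1 - 'X) * (od_A M + a%:P * od_B M + a%:P * od_D M + (a * a)%:P * od_E M)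
  = 'X * (M%:P * 1 * ev_E).
Proof.
have -> : od_A M + a%:P * od_B M + a%:P * od_D M + (a * a)%:P * od_E M
    = od_A M + (a * M)%:P * (((q - 1) * (2 + (q - 1) * M))%:P + 2%:P * 'X - M%:P * 'X ^+ 2)
      - ((a * M) ^+ 2)%:P * ((q - 1)%:P + 'X).
  by rewrite /od_B /od_D /od_E; ring.
by rewrite aM /od_A /ev_E; ring.
Qed.

Lemma od_step_D : (- M * q)%:P * (od_B M + a%:P * od_E M) = M%:P * 1 * ev_D M.
Proof. by rewrite od_E_scale aM /od_B /ev_D; ring. Qed.

Lemma od_step_B :
  (- M)%:P * (1 - 'X) * (od_D M + a%:P * od_E M) = M%:P * 1 * ev_B M.
Proof. by rewrite od_E_scale aM /od_D /ev_B; ring. Qed.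

Lemma od_step_A : (- M * - M * q)%:P * 'X * od_E M = M%:P * 1 * ev_A M.
Proof. by rewrite /od_E /ev_A; ring. Qed.
End OddStep.

Lemma ev_at0 : [/\ ev_A 0 = 0, ev_B 0 = - (1 - 'X) & ev_D 0 = q%:P].
Proof. by split; rewrite /ev_A /ev_B /ev_D; ring. Qed.

Lemma coef0_ev_A K : (ev_A K)`_0 = 0.
Proof. by rewrite -horner_coef0 /ev_A !hornerE; ring. Qed.

Lemma coef0_od_A M : (od_A M)`_0 = 0.
Proof. by rewrite -horner_coef0 /od_A !hornerE; ring. Qed.
End RiccatiFamilies.

Section RiccatiConstantTerm.
Variables (F : fieldType) (q : F).
Hypothesis q1 : q - 1 != 0.
Import mathcomp.algebra_tactics.ring.
Implicit Types (G : ps F) (K M a : F).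

Definition riccati_ev K := riccati q (ev_A q K) (ev_B K) (ev_D q K) (ev_E q).
Definition riccati_od M := riccati q (od_A q M) (od_B q M) (od_D q M) (od_E q M).

Let horner0E :=
  (hornerD, hornerN, hornerM, horner_exp, hornerX, hornerC, expr0n, mulr0, mul0r, addr0, subr0).

Lemma riccati_ev_coef0 K G :
  riccati_ev K G -> G 0%N * (1 + 2 * q * K + q * (q - 1) * K ^+ 2) = 1.
Proof.
move=> /riccati_coef0 /(_ (coef0_ev_A q K)).
rewrite -!horner_coef0 /ev_B /ev_D /ev_E !horner0E => G0.
apply: (mulfI q1); rewrite mulr1; apply/eqP; rewrite -subr_eq0 -G0; apply/eqP.
ring.
Qed.

Lemma riccati_od_coef0 M a G :
  M != 0 -> a * M = 2 + (q - 1) * M -> riccati_od M G -> G 0%N * a = 1.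
Proof.
move=> M0 aM /riccati_coef0 /(_ (coef0_od_A q M)).
rewrite -!horner_coef0 /od_B /od_D /od_E !horner0E => G0.
apply: (mulfI (mulf_neq0 (mulf_neq0 q1 M0) M0)); rewrite mulr1.
apply/eqP; rewrite -subr_eq0 -G0; apply/eqP.
rewrite (_ : (q - 1) * M * M * (G 0%N * a) = (q - 1) * M * G 0%N * (a * M)); last by ring.
by rewrite aM; ring.
Qed.
End RiccatiConstantTerm.

Section FamilySteps.
Variables (F : fieldType) (q : F).
Hypothesis q1 : q - 1 != 0.
Implicit Types (G : ps F) (K M a c : F).
Add Ring ps_ring : (ps_ring F).

(* The next remainder (1 / G - a) / (c x), where a is the constant term of 1 / G. *)
Definition cf_next G c : ps F := fun n => psV G n.+1 / c.

Lemma cf_step_next G a c : psV G 0%N = a -> c != 0 -> cf_step a c (cf_next G c) = psV G.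
Proof.
move=> G0 c0; apply: functional_extensionality => -[|n];
  rewrite /cf_step /psD coef_psMC coef_psMX /psC /=; first by rewrite mulr0 addr0.
by rewrite add0r mulrC divfK.
Qed.

Lemma psM_cf_next G a c : G 0%N * a = 1 -> c != 0 -> (G * cf_step a c (cf_next G c) = 1)%ps.
Proof.
move=> Ga c0.
have G0 : G 0%N != 0 by apply: contra_eq_neq Ga => ->; rewrite mul0r eq_sym oner_eq0.
by rewrite cf_step_next ?psMV // coef0_psV; apply: mulr1_eq.
Qed.

Lemma riccati_ev_step K G : (1 + (q - 1) * K) * (1 + q * K) != 0 ->
  riccati_ev q K G -> riccati_od q (1 + q * K) (cf_next G ((1 + (q - 1) * K) * (1 + q * K))).
Proof.
move=> c0 RG; apply: (riccati_cf_step RG (psM_cf_next (riccati_ev_coef0 q1 RG) c0) _ _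
  (ev_step_E q K) (ev_step_D q K) (ev_step_B q K) (ev_step_A q K)).
  by rewrite oppr_eq0.
by rewrite coefB coef1 coefX subr0 oner_eq0.
Qed.

Lemma riccati_od_step M a G : M != 0 -> a * M = 2 + (q - 1) * M ->
  riccati_od q M G -> riccati_ev q M (cf_next G (- M)).
Proof.
move=> M0 aM RG; have c0 : - M != 0 by rewrite oppr_eq0.
apply: (riccati_cf_step RG (psM_cf_next (riccati_od_coef0 q1 M0 aM RG) c0) M0 _
  (od_step_E aM) (od_step_D aM) (od_step_B aM) (od_step_A q M)).
by rewrite coef1 oner_eq0.
Qed.

Lemma riccati_ev0 B :
  (psC q * qbinom_transform q B - B = psC (q - 1) + 'x)%ps -> riccati_ev q 0 B.
Proof.
move=> rel; rewrite /riccati_ev /riccati; have [-> -> ->] := ev_at0 q.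
rewrite ps_comp_psY /ev_E !ps_of_polyE.
(* The two occurrences of [psC (q - 1)] differ in their instance paths; naming them
   lets [ring] see a single atom. *)
set t := psC (q - 1) in rel *.
transitivity ((1 - 'x) * (psC q * qbinom_transform q B - B - (t + 'x)))%ps; first by ring.
by rewrite rel; ring.
Qed.
End FamilySteps.

Lemma fps_invE (f : fps) : fps_inv f = psV f.
Proof.
have seqE n : fps_inv_seq f n = psV_seq f n by elim: n => //= n ->.
by apply: functional_extensionality => n; rewrite /fps_inv seqE.
Qed.

Lemma cf_tailS (a c : nat -> Kq) j d :
  cf_tail a c j d.+1 = cf_step (a j) (c j.+1) (psV (cf_tail a c j.+1 d)).
Proof.
rewrite /= fps_invE; apply: functional_extensionality => n.
by rewrite /cf_step /psD coef_psMC coef_psMX.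
Qed.

Lemma qq_neq0 : qq != 0.
Proof. by rewrite /qq -tofrac0 tofrac_eq polyX_eq0. Qed.

Lemma qq_expn_neq1 n : (0 < n)%N -> qq ^+ n != 1.
Proof.
move=> n_gt0; rewrite /qq -tofracXn -tofrac1 tofrac_eq.
by apply: contraTneq n_gt0 => /(congr1 (fun p : {poly rat} => p`_0)); rewrite coefXn coef1; case: n.
Qed.

Lemma qq_sub1_neq0 : qq - 1 != 0.
Proof. by rewrite subr_eq0 -{1}(expr1 qq) qq_expn_neq1. Qed.

Section QInteger.
Variables (F : fieldType) (q : F).
Hypothesis q1 : q - 1 != 0.

Definition qnat k : F := (q ^+ k - 1) / (q - 1).

Lemma qnat_expr k : q ^+ k = 1 + (q - 1) * qnat k.
Proof. by rewrite /qnat mulrC divfK // addrC subrK. Qed.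

Lemma qnatS k : qnat k.+1 = 1 + q * qnat k.
Proof. by rewrite /qnat exprS; field. Qed.

Lemma qnat_double_succ k : qnat k.*2.+1 = 1 + 2 * q * qnat k + q * (q - 1) * qnat k ^+ 2.
Proof. by rewrite {1}/qnat exprS -muln2 exprM qnat_expr; field. Qed.
End QInteger.

Lemma qint_expr k : qq ^+ k = 1 + (qq - 1) * qint k.
Proof. exact: qnat_expr qq_sub1_neq0 k. Qed.

Lemma qintS k : qint k.+1 = 1 + qq * qint k.
Proof. exact: qnatS qq_sub1_neq0 k. Qed.

Lemma qint_neq0 k : qint k.+1 != 0.
Proof.
apply: mulf_neq0; first by rewrite subr_eq0; exact: qq_expn_neq1.
by rewrite invr_eq0; exact: qq_sub1_neq0.
Qed.

Lemma cfB_a_double k : cfB_a k.*2 = 1 + 2 * qq * qint k + qq * (qq - 1) * qint k ^+ 2.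
Proof. by rewrite /cfB_a odd_double; exact: qnat_double_succ qq_sub1_neq0 k. Qed.

Lemma cfB_a_double_succ k : cfB_a k.*2.+1 * qint k.+1 = 2 + (qq - 1) * qint k.+1.
Proof.
rewrite /cfB_a /= odd_double uphalf_double (divfK (qint_neq0 k)) qint_expr.
by rewrite addrAC -addrA.
Qed.

Lemma cfB_c_double_succ k : cfB_c k.*2.+1 = (1 + (qq - 1) * qint k) * (1 + qq * qint k).
Proof. by rewrite /cfB_c /= odd_double uphalf_double qint_expr qintS. Qed.

Lemma cfB_c_double_succ_succ k : cfB_c k.*2.+2 = - qint k.+1.
Proof. by rewrite /cfB_c -doubleS odd_double doubleK. Qed.

Lemma cfB_c_neq0 j : cfB_c j.+1 != 0.
Proof.
rewrite -[j]odd_double_half; case: (odd j) => /=.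
  by rewrite add1n cfB_c_double_succ_succ oppr_eq0; exact: qint_neq0.
rewrite add0n cfB_c_double_succ -qint_expr -qintS.
exact: mulf_neq0 (expf_neq0 _ qq_neq0) (qint_neq0 _).
Qed.

Section QBernoulliCarlitz.
Variable beta : nat -> Kq.
Hypothesis hbeta : is_qBernoulliCarlitz beta.

Fixpoint cfB_remainder (j : nat) : ps Kq :=
  if j is j'.+1 then cf_next (cfB_remainder j') (cfB_c j) else beta.

Lemma qBernoulliCarlitz_qbinom :
  (psC qq * qbinom_transform qq beta - beta = psC (qq - 1) + 'x)%ps.
Proof.
apply: functional_extensionality => n.
rewrite /psB /psD coef_psMC /qbinom_transform hbeta /psC /psX.
by case: n => [|[|n]] /=; rewrite ?addr0 ?add0r.
Qed.

Lemma riccati_ev_cfB_step k G :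
  riccati_ev qq (qint k) G -> riccati_od qq (qint k.+1) (cf_next G (cfB_c k.*2.+1)).
Proof.
move=> RG; have := cfB_c_neq0 k.*2; rewrite qintS cfB_c_double_succ => c0.
exact (riccati_ev_step qq_sub1_neq0 c0 RG).
Qed.

Lemma riccati_od_cfB_step k G :
  riccati_od qq (qint k.+1) G -> riccati_ev qq (qint k.+1) (cf_next G (cfB_c k.*2.+2)).
Proof.
rewrite cfB_c_double_succ_succ.
exact (riccati_od_step qq_sub1_neq0 (qint_neq0 k) (cfB_a_double_succ k)).
Qed.

Lemma cfB_remainder_riccati k :
  riccati_ev qq (qint k) (cfB_remainder k.*2) /\ riccati_od qq (qint k.+1) (cfB_remainder k.*2.+1).
Proof.
elim: k => [|k [_ RO]].
  have RE : riccati_ev qq (qint 0) (cfB_remainder 0).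
    by rewrite /qint expr0 subrr mul0r; exact: riccati_ev0 qBernoulliCarlitz_qbinom.
  by split; last exact: riccati_ev_cfB_step.
have RE := riccati_od_cfB_step RO; rewrite doubleS.
by split; last exact: riccati_ev_cfB_step.
Qed.

Lemma cfB_remainder_coef0 j : cfB_remainder j 0%N * cfB_a j = 1.
Proof.
rewrite -[j]odd_double_half; case: (odd j) => /=; have [RE RO] := cfB_remainder_riccati j./2.
  by rewrite add1n; exact (riccati_od_coef0 qq_sub1_neq0 (qint_neq0 _) (cfB_a_double_succ _) RO).
by rewrite add0n cfB_a_double; exact (riccati_ev_coef0 qq_sub1_neq0 RE).
Qed.

Lemma cfB_remainder_neq0 j : cfB_remainder j 0%N != 0.
Proof. by apply: contra_eq_neq (cfB_remainder_coef0 j) => ->; rewrite mul0r eq_sym oner_eq0. Qed.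

Lemma psV_cfB_remainder j : psV (cfB_remainder j) = cf_step (cfB_a j) (cfB_c j.+1) (cfB_remainder j.+1).
Proof.
symmetry; apply: cf_step_next (cfB_c_neq0 j).
by rewrite coef0_psV; apply: mulr1_eq; exact: cfB_remainder_coef0.
Qed.

Lemma cf_tail_cfB_eq_upto d j : eq_upto d (cf_tail cfB_a cfB_c j d) (psV (cfB_remainder j)).
Proof.
elim: d j => [|d IHd] j; rewrite psV_cfB_remainder.
  by apply/eq_uptoP => m; rewrite leqn0 => /eqP ->; rewrite /cf_step /psD coef_psMC coef_psMX mulr0 addr0.
rewrite cf_tailS; apply: cf_step_eq_upto.
rewrite -(psVK (cfB_remainder_neq0 j.+1)); apply: esym (psV_eq_upto _ (esym (IHd j.+1))).
by rewrite coef0_psV invr_eq0; exact: cfB_remainder_neq0.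
Qed.
End QBernoulliCarlitz.

Theorem mainTheorem8 (beta : nat -> Kq) :
  is_qBernoulliCarlitz beta ->
  forall N : nat, exists M : nat, forall m : nat, (M <= m)%N ->
    forall n : nat, (n <= N)%N -> cf_convergent cfB_a cfB_c m n = beta n.
Proof.
move=> hbeta N; exists N => m le_Nm n le_nN.
have rem0 := cfB_remainder_neq0 hbeta 0.
have V0 : psV (cfB_remainder beta 0) 0%N != 0 by rewrite coef0_psV invr_eq0.
have /eq_uptoP := psV_eq_upto V0 (esym (cf_tail_cfB_eq_upto hbeta m 0)).
rewrite (psVK rem0) => /(_ n (leq_trans le_nN le_Nm)) E.
by rewrite /cf_convergent fps_invE -E.
Qed.
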